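(* Let $T_{abc}$ be the torsion tensor of a 4-dimensional teleparallel geometry, decomposed as $T_{abc}=\tfrac23(t_{abc}-t_{acb})-\tfrac13(g_{ab}V_c-g_{ac}V_b)+\epsilon_{abcd}A^d$ into its vector part $V_a=T^b{}_{ba}$, axial part $A^a=\tfrac16\epsilon^{abcd}T_{bcd}$ and purely tensor part $t_{(ab)c}=\tfrac12(T_{abc}+T_{bac})-\tfrac16(g_{ca}V_b+g_{cb}V_a)+\tfrac13 g_{ab}V_c$. Then $T_{abc}$ is of alignment type II or more special if and only if, relative to a common null coframe, (i) the purely tensor part $t_{(ab)c}$ is of alignment type II, III, N or O, and (ii) the vector part $V$ and the axial part $A$ are each of alignment type II, III or O.
   Context: A teleparallel geometry is a 4-dimensional manifold with a coframe $\{\mathbf h^a\}$, metric $g=\eta_{ab}\mathbf h^a\otimes\mathbf h^b$ of Lorentzian signature, and a flat metric-compatible spin connection $\omega^a{}_b$; the torsion is $T^a{}_{\mu\nu}=\partial_\mu h^a{}_\nu-\partial_\nu h^a{}_\mu+\omega^a{}_{b\mu}h^b{}_\nu-\omega^a{}_{b\nu}h^b{}_\mu$, with frame indices lowered by $\eta_{ab}$; $\epsilon_{abcd}$ is the volume form. A complex null coframe is $\{\mathbf h^1,\mathbf h^2,\mathbf h^3,\mathbf h^4\}=\{\mathbf n,\boldsymbol\ell,\bar{\mathbf m},\mathbf m\}$ with $\eta_{12}=\eta_{21}=-1$, $\eta_{34}=\eta_{43}=1$, other $\eta_{ab}=0$. The boost weight of a covariant frame component $T_{a_1\dots a_r}$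 is the number of indices equal to $1$ minus the number equal to $2$. Relative to a given null coframe, a nonzero tensor is of alignment type II or more special if all its components of positive boost weight vanish, of type III or more special if all components of boost weight $\ge0$ vanish, of type N if all components of boost weight $\ge -1$ vanish, and of type O if it vanishes; a tensor is of a given type if such a null coframe exists. *)

From HB Require Import structures.
From mathcomp Require Import all_boot all_order all_algebra.
From mathcomp Require Import complex.
Set Implicit Arguments. Unset Strict Implicit. Unset Printing Implicit Defensive.
Import Order.TTheory GRing.Theory Num.Theory.
Local Open Scope ring_scope.

Section TP.
Variable R : rcfType.

Definition toC (x : R) : R[i] := Complex x 0.

(* coordinate components of tensors at a point (indices mu,nu,... : 'I_4) *)
Definition tensor3 := 'I_4 -> 'I_4 -> 'I_4 -> R.
Definition covec := 'I_4 -> R.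

Definition minkowski : 'M[R]_4 :=
  \matrix_(i, j) (if i == j then (if i == 0 then -1 else 1) else 0).

(* g is a Lorentzian metric: congruent to diag(-1,1,1,1) (Sylvester) *)
Definition lorentzian (g : 'M[R]_4) : Prop :=
  exists P : 'M[R]_4, P \in unitmx /\ P^T *m g *m P = minkowski.

Definition antisym23 (T : tensor3) : Prop :=
  forall mu nu rho, T mu nu rho = - T mu rho nu.

Definition levi (m n r s : 'I_4) : R :=
  \det (\matrix_(i < 4, j < 4)
          ((tnth [tuple m; n; r; s] i == j)%:R : R)).

Definition eps_low (g : 'M[R]_4) (m n r s : 'I_4) : R :=
  Num.sqrt `|\det g| * levi m n r s.

Definition eps_up (g : 'M[R]_4) (a b c d : 'I_4) : R :=
  \sum_(m < 4) \sum_(n < 4) \sum_(r < 4) \sum_(s < 4)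
    (invmx g) a m * (invmx g) b n * (invmx g) c r * (invmx g) d s
      * eps_low g m n r s.

Definition Vpart (g : 'M[R]_4) (T : tensor3) : covec :=
  fun a => \sum_(b < 4) \sum_(k < 4) (invmx g) b k * T k b a.

Definition Apart_up (g : 'M[R]_4) (T : tensor3) : covec :=
  fun a => 6^-1 * \sum_(b < 4) \sum_(c < 4) \sum_(d < 4) eps_up g a b c d * T b c d.

(* A_a = g_{ab} A^b (covariant components, used for boost weights) *)
Definition Apart (g : 'M[R]_4) (T : tensor3) : covec :=
  fun a => \sum_(b < 4) g a b * Apart_up g T b.

Definition tpart (g : 'M[R]_4) (T : tensor3) : tensor3 :=
  fun a b c => 2^-1 * (T a b c + T b a c)
               - 6^-1 * (g c a * Vpart g T b + g c b * Vpart g T a)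
               + 3^-1 * g a b * Vpart g T c.

(* frame metric of the complex null (co)frame {n, l, mbar, m}:
   indices 0,1,2,3 stand for 1,2,3,4; eta_12 = eta_21 = -1,
   eta_34 = eta_43 = 1, other components 0 *)
Definition eta (a b : 'I_4) : R[i] :=
  if ((a == 0) && (b == 1)) || ((a == 1) && (b == 0)) then -1
  else if ((a == 2) && (b == 3)) || ((a == 3) && (b == 2)) then 1
  else 0.

(* E a mu = coordinate components of the frame vector h_a dual to the
   coframe h^a.  (g = eta_ab h^a h^b) <-> g(h_a, h_b) = eta_ab.
   Reality: n, l real, m = conjugate of mbar. *)
Definition null_frame (g : 'M[R]_4) (E : 'I_4 -> 'I_4 -> R[i]) : Prop :=
  (forall a b : 'I_4,
      \sum_(m < 4) \sum_(n < 4) toC (g m n) * E a m * E b n = eta a b)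
  /\ (forall m : 'I_4,
      conjc (E 0 m) = E 0 m /\ conjc (E 1 m) = E 1 m /\ E 3 m = conjc (E 2 m)).

Definition comp3 (E : 'I_4 -> 'I_4 -> R[i]) (T : tensor3) (a b c : 'I_4) : R[i] :=
  \sum_(m < 4) \sum_(n < 4) \sum_(r < 4) toC (T m n r) * E a m * E b n * E c r.

Definition comp1 (E : 'I_4 -> 'I_4 -> R[i]) (V : covec) (a : 'I_4) : R[i] :=
  \sum_(m < 4) toC (V m) * E a m.

Definition bw (a : 'I_4) : int := (a == 0)%:R - (a == 1)%:R.

Definition typeII_or_more3 (E : 'I_4 -> 'I_4 -> R[i]) (T : tensor3) : Prop :=
  forall a b c : 'I_4, 0 < bw a + bw b + bw c -> comp3 E T a b c = 0.

Definition typeII_or_more1 (E : 'I_4 -> 'I_4 -> R[i]) (V : covec) : Prop :=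
  forall a : 'I_4, 0 < bw a -> comp1 E V a = 0.

End TP.

(* Everything is computed in the null frame E, with indices 0, 1, 2, 3 standing
   for n, l, mbar, m.  Since eta is its own inverse, the frame relation
   E g E^T = eta gives g^-1 = E^T eta E; hence, writing T_abc for the frame
   components of T, the vector part is V_a = eta^pq T_qpa, the tensor part is
   t_pqr = 1/2 (T_pqr + T_qpr) - 1/6 (eta_rp V_q + eta_rq V_p) + 1/3 eta_pq V_r,
   and, because contracting the Levi-Civita symbol with four copies of E
   produces det E, A_0 is a nonzero multiple of eps_0^bcd T_bcd
   = 2 (T_023 + T_302 - T_203).
   As eta only pairs indices of opposite boost weight, every component of t, V
   and A of positive boost weight involves only components of T of positive
   boost weight.  Conversely, once V_0 = 0 the components t_001, t_002, t_003,
   t_202, t_303 are (multiples of) T_001, T_002, T_003, T_202, T_303, while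
   t_023 and t_032 express T_203 and T_302 through T_023, which A_0 = 0 then
   forces to vanish. *)

From Pilot Require Import Defs.
From HB Require Import structures.
From mathcomp Require Import all_boot all_order all_algebra.
From mathcomp Require Import complex ring perm.
Set Implicit Arguments. Unset Strict Implicit. Unset Printing Implicit Defensive.
Import Order.TTheory GRing.Theory Num.Theory.
Local Open Scope ring_scope.
Local Open Scope complex_scope.

Lemma ord4P (i : 'I_4) : [\/ i = 0, i = 1, i = 2 | i = 3].
Proof.
by case: i => [[|[|[|[|//]]]] ?]; [apply: Or41 | apply: Or42 | apply: Or43 | apply: Or44];
  apply: val_inj.
Qed.

Lemma sum4 (V : nmodType) (F : 'I_4 -> V) :
  \sum_(i < 4) F i = F 0 + F 1 + F 2 + F 3.
Proof.
rewrite !big_ord_recr big_ord0 /= add0r.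
by congr (_ + _ + _ + _); congr F; apply: val_inj.
Qed.

Section NestedSums.
Variables (V : nmodType) (I : finType).

Lemma exchange_big3 (F : I -> I -> I -> V) :
  \sum_a \sum_b \sum_c F a b c = \sum_c \sum_a \sum_b F a b c.
Proof. by under eq_bigr do rewrite exchange_big; rewrite exchange_big. Qed.

Lemma exchange_big31 (J : finType) (F : I -> I -> I -> J -> V) :
  \sum_a \sum_b \sum_c \sum_j F a b c j = \sum_j \sum_a \sum_b \sum_c F a b c j.
Proof.
under eq_bigr do under eq_bigr do rewrite exchange_big.
by under eq_bigr do rewrite exchange_big; rewrite exchange_big.
Qed.

Lemma exchange_big33 (F : I -> I -> I -> I -> I -> I -> V) :
  \sum_a \sum_b \sum_c \sum_d \sum_e \sum_f F a b c d e f =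
  \sum_d \sum_e \sum_f \sum_a \sum_b \sum_c F a b c d e f.
Proof.
rewrite exchange_big31; apply: eq_bigr => d _.
rewrite exchange_big31; apply: eq_bigr => e _.
exact: exchange_big31.
Qed.

End NestedSums.

Lemma sum_delta (K : pzSemiRingType) (I : finType) (k : I) (F : I -> K) :
  \sum_i (i == k)%:R * F i = F k.
Proof.
rewrite (bigD1 k) //= eqxx mul1r big1 ?addr0 // => i /negbTE ->.
by rewrite mul0r.
Qed.

Section LeviCivita.
Variable K : comNzRingType.

(* [levi] of Defs over any commutative ring (it is needed over R[i]);
   [levi R] is convertible to [levi_symbol R]. *)
Definition levi_symbol (m n r s : 'I_4) : K :=
  \det (\matrix_(i < 4, j < 4) ((tnth [tuple m; n; r; s] i == j)%:R : K)).

Local Notation L := levi_symbol.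

Lemma levi_leibniz (N : 'M[K]_4) :
  \sum_x \sum_n \sum_r \sum_s L x n r s * (N 0 x * N 1 n * N 2 r * N 3 s) = \det N.
Proof.
under eq_bigr do under eq_bigr do under eq_bigr do under eq_bigr do
  rewrite /L /determinant mulr_suml.
under eq_bigr do under eq_bigr do under eq_bigr do rewrite exchange_big.
under eq_bigr do under eq_bigr do rewrite exchange_big.
under eq_bigr do rewrite exchange_big.
rewrite exchange_big; apply: eq_bigr => s _.
have prod4 (F : 'I_4 -> K) : \prod_i F i = F 0 * F 1 * F 2 * F 3.
  rewrite !big_ord_recr big_ord0 /= mul1r.
  by congr (_ * _ * _ * _); congr F; apply: val_inj.
have reorder (a b c d e f : K) : a * (b * c * d * e) * f = e * (d * (c * (b * (a * f)))).
  by ring.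
under eq_bigr => x _ do under eq_bigr => n _ do under eq_bigr => r _ do
  under eq_bigr => t _ do rewrite prod4 !mxE /= reorder.
under eq_bigr do under eq_bigr do under eq_bigr do rewrite sum_delta.
under eq_bigr do under eq_bigr do rewrite sum_delta.
under eq_bigr do rewrite sum_delta.
by rewrite sum_delta prod4.
Qed.

Lemma levi_symbol_det (M : 'M[K]_4) a b c d :
  \sum_x \sum_n \sum_r \sum_s M a x * M b n * M c r * M d s * L x n r s
  = L a b c d * \det M.
Proof.
set P := \matrix_(i < 4, j < 4) ((tnth [tuple a; b; c; d] i == j)%:R : K).
have PM i j : (P *m M) i j = M (tnth [tuple a; b; c; d] i) j.
  by rewrite mxE; under eq_bigr do rewrite mxE eq_sym; rewrite sum_delta.
rewrite -det_mulmx -levi_leibniz; do 4 (apply: eq_bigr => ? _).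
by rewrite !PM mulrC.
Qed.

Lemma levi_symbol_alternate (i1 i2 : 'I_4) m n r s :
  i1 != i2 -> tnth [tuple m; n; r; s] i1 = tnth [tuple m; n; r; s] i2 -> L m n r s = 0.
Proof. by move=> ne12 eq12; apply: (determinant_alternate ne12) => j; rewrite !mxE eq12. Qed.

Lemma levi_symbol_swap (i1 i2 : 'I_4) m n r s m' n' r' s' :
  i1 != i2 ->
  (forall i, tnth [tuple m'; n'; r'; s'] i = tnth [tuple m; n; r; s] (tperm i1 i2 i)) ->
  L m' n' r' s' = - L m n r s.
Proof.
move=> ne12 eq12; rewrite /L.
have -> : \matrix_(i, j) ((tnth [tuple m'; n'; r'; s'] i == j)%:R : K) =
          xrow i1 i2 (\matrix_(i, j) ((tnth [tuple m; n; r; s] i == j)%:R : K)).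
  by apply/matrixP => i j; rewrite !mxE eq12.
by rewrite xrowE det_mulmx det_perm odd_tperm ne12 mulN1r.
Qed.

Lemma levi_symbol_swap23 m n r s : L m r n s = - L m n r s.
Proof.
apply: (@levi_symbol_swap 1 2) => // i.
by case: (ord4P i) => ->; rewrite ?tpermL ?tpermR ?tpermD.
Qed.

Lemma levi_symbol_swap34 m n r s : L m n s r = - L m n r s.
Proof.
apply: (@levi_symbol_swap 2 3) => // i.
by case: (ord4P i) => ->; rewrite ?tpermL ?tpermR ?tpermD.
Qed.

Lemma levi_symbol0123 : L 0 1 2 3 = 1.
Proof.
rewrite /L -[RHS](det1 K 4); congr (\det _); apply/matrixP => i j.
by rewrite !mxE; case: (ord4P i) => ->.
Qed.

End LeviCivita.

Lemma levi_symbol_map (K K' : comNzRingType) (f : {rmorphism K -> K'}) m n r s :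
  f (levi_symbol K m n r s) = levi_symbol K' m n r s.
Proof.
rewrite /levi_symbol -det_map_mx; congr (\det _); apply/matrixP => i j.
by rewrite !mxE rmorph_nat.
Qed.

Section Transform.
Variables (K : comNzRingType) (k : nat).
Implicit Types (M : 'M[K]_k) (X Y : 'I_k -> 'I_k -> 'I_k -> K).

Definition transform3 M X a b c : K :=
  \sum_m \sum_n \sum_r M a m * M b n * M c r * X m n r.

Definition contract3 X Y : K := \sum_a \sum_b \sum_c X a b c * Y a b c.

Lemma eq_transform3 M X Y a b c :
  (forall a b c, X a b c = Y a b c) -> transform3 M X a b c = transform3 M Y a b c.
Proof. by move=> eqXY; do 3 (apply: eq_bigr => ? _); rewrite eqXY. Qed.

Lemma eq_contract3 X X' Y Y' :
  (forall a b c, X a b c = X' a b c) -> (forall a b c, Y a b c = Y' a b c) ->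
  contract3 X Y = contract3 X' Y'.
Proof. by move=> eqX eqY; do 3 (apply: eq_bigr => ? _); rewrite eqX eqY. Qed.

Lemma transform3_mulmx M1 M2 X a b c :
  transform3 (M1 *m M2) X a b c = transform3 M1 (transform3 M2 X) a b c.
Proof.
rewrite /transform3.
under [RHS]eq_bigr do under eq_bigr do under eq_bigr do rewrite mulr_sumr.
under [RHS]eq_bigr do under eq_bigr do under eq_bigr do under eq_bigr do rewrite mulr_sumr.
under [RHS]eq_bigr do under eq_bigr do under eq_bigr do under eq_bigr do under eq_bigr do
  rewrite mulr_sumr.
rewrite [RHS]exchange_big33; do 3 (apply: eq_bigr => ? _).
rewrite !mxE !mulr_suml; apply: eq_bigr => m _.
rewrite !mulr_sumr !mulr_suml exchange_big; apply: eq_bigr => n _.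
by rewrite !mulr_suml; apply: eq_bigr => r _; ring.
Qed.

Lemma contract3_transform M X Y :
  contract3 X (transform3 M^T Y) = contract3 (transform3 M X) Y.
Proof.
rewrite /contract3 /transform3.
under eq_bigr do under eq_bigr do under eq_bigr do rewrite mulr_sumr.
under eq_bigr do under eq_bigr do under eq_bigr do under eq_bigr do rewrite mulr_sumr.
under eq_bigr do under eq_bigr do under eq_bigr do under eq_bigr do under eq_bigr do
  rewrite mulr_sumr.
under [RHS]eq_bigr do under eq_bigr do under eq_bigr do rewrite mulr_suml.
under [RHS]eq_bigr do under eq_bigr do under eq_bigr do under eq_bigr do rewrite mulr_suml.
under [RHS]eq_bigr do under eq_bigr do under eq_bigr do under eq_bigr do under eq_bigr do
  rewrite mulr_suml.
by rewrite exchange_big33; do 6 (apply: eq_bigr => ? _); rewrite !mxE; ring.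
Qed.

End Transform.

Section TransformMorphism.
Variables (K K' : comNzRingType) (f : {rmorphism K -> K'}) (k : nat).
Implicit Types (M : 'M[K]_k) (X Y : 'I_k -> 'I_k -> 'I_k -> K).

Lemma transform3_map M X a b c :
  f (transform3 M X a b c) = transform3 (map_mx f M) (fun m n r => f (X m n r)) a b c.
Proof.
rewrite /transform3 !rmorph_sum; apply: eq_bigr => m _.
rewrite !rmorph_sum; apply: eq_bigr => n _; rewrite !rmorph_sum; apply: eq_bigr => r _.
by rewrite !rmorphM !mxE.
Qed.

Lemma contract3_map X Y :
  f (contract3 X Y) = contract3 (fun a b c => f (X a b c)) (fun a b c => f (Y a b c)).
Proof.
rewrite /contract3 !rmorph_sum; apply: eq_bigr => a _.
rewrite !rmorph_sum; apply: eq_bigr => b _; rewrite !rmorph_sum; apply: eq_bigr => c _.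
exact: rmorphM.
Qed.

End TransformMorphism.

Lemma contract3_levi_transform (K : comNzRingType) (M : 'M[K]_4) Y a :
  \sum_x M a x * contract3 (levi_symbol K x) (transform3 M^T Y)
  = \det M * contract3 (levi_symbol K a) Y.
Proof.
have levi_mx b c d : \sum_x M a x * transform3 M (levi_symbol K x) b c d
                     = \det M * levi_symbol K a b c d.
  rewrite mulrC -levi_symbol_det; apply: eq_bigr => x _.
  rewrite mulr_sumr; apply: eq_bigr => n _; rewrite mulr_sumr; apply: eq_bigr => r _.
  by rewrite mulr_sumr; apply: eq_bigr => s _; ring.
under eq_bigr do rewrite contract3_transform /contract3 mulr_sumr.
rewrite exchange_big /contract3 mulr_sumr; apply: eq_bigr => b _.
under eq_bigr do rewrite mulr_sumr.
rewrite exchange_big mulr_sumr; apply: eq_bigr => c _.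
under eq_bigr do rewrite mulr_sumr.
rewrite exchange_big mulr_sumr; apply: eq_bigr => d _.
by under eq_bigr do rewrite mulrA; rewrite -mulr_suml levi_mx mulrA.
Qed.

Lemma Apart_contract (R : rcfType) (g : 'M[R]_4) (T : tensor3 R) x :
  g \in unitmx ->
  Apart g T x = 6^-1 * Num.sqrt `|\det g|
                * contract3 (levi_symbol R x) (transform3 (invmx g)^T T).
Proof.
move=> g_unit; set gi := invmx g.
set F := fun m => contract3 (levi_symbol R m) (transform3 gi^T T).
have eps_upE b c d e :
    eps_up g b c d e = \sum_m gi b m * transform3 gi (eps_low g m) c d e.
  apply: eq_bigr => m _; rewrite mulr_sumr; apply: eq_bigr => n _.
  rewrite mulr_sumr; apply: eq_bigr => r _; rewrite mulr_sumr; apply: eq_bigr => s _.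
  by rewrite !mulrA.
have Apart_upE b : Apart_up g T b = 6^-1 * Num.sqrt `|\det g| * \sum_m gi b m * F m.
  rewrite /Apart_up -mulrA; congr (_ * _).
  under eq_bigr do under eq_bigr do under eq_bigr do rewrite eps_upE mulr_suml.
  rewrite exchange_big31 mulr_sumr; apply: eq_bigr => m _.
  transitivity (gi b m * contract3 (transform3 gi (eps_low g m)) T).
    rewrite /contract3 mulr_sumr; apply: eq_bigr => c _; rewrite mulr_sumr.
    by apply: eq_bigr => d _; rewrite mulr_sumr; apply: eq_bigr => e _; rewrite mulrA.
  rewrite -contract3_transform mulrCA; congr (_ * _).
  rewrite /F /contract3 mulr_sumr; apply: eq_bigr => n _.
  rewrite mulr_sumr; apply: eq_bigr => r _; rewrite mulr_sumr; apply: eq_bigr => s _.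
  by rewrite /eps_low mulrA.
rewrite /Apart; under eq_bigr do rewrite Apart_upE mulrCA mulr_sumr.
rewrite -mulr_sumr; congr (_ * _).
transitivity (\sum_m (g *m gi) x m * F m).
  rewrite exchange_big; apply: eq_bigr => m _; rewrite mxE mulr_suml.
  by apply: eq_bigr => b _; rewrite mulrA.
by rewrite mulmxV //; under eq_bigr do rewrite mxE eq_sym; rewrite sum_delta.
Qed.

Definition boost_nonpositive3 (U : zmodType) (X : 'I_4 -> 'I_4 -> 'I_4 -> U) :=
  forall a b c, 0 < bw a + bw b + bw c -> X a b c = 0.

Section NullFrameAlgebra.
Variable R : rcfType.
Local Notation C := R[i].
Local Notation eta := (Defs.eta R).
Implicit Types X : 'I_4 -> 'I_4 -> 'I_4 -> C.

Definition eta_mx : 'M[C]_4 := \matrix_(a, b) eta a b.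

Lemma eta_mx_tr : eta_mx^T = eta_mx.
Proof. by apply/matrixP => i j; rewrite !mxE; case: (ord4P i) => ->; case: (ord4P j) => ->. Qed.

Lemma eta_mx_involutive : eta_mx *m eta_mx = 1%:M.
Proof.
apply/matrixP => i j; rewrite !mxE sum4 !mxE.
by case: (ord4P i) => ->; case: (ord4P j) => ->; rewrite /eta /=; ring.
Qed.

Definition null_partner (a : 'I_4) : 'I_4 :=
  if a == 0 then 1 else if a == 1 then 0 else if a == 2 then 3 else 2.

Lemma sum_eta a (F : 'I_4 -> C) :
  \sum_m eta a m * F m = eta a (null_partner a) * F (null_partner a).
Proof. by rewrite sum4; case: (ord4P a) => ->; rewrite /eta /=; ring. Qed.

Lemma transform3_eta X n r s :
  transform3 eta_mx X n r s =
  eta n (null_partner n) * eta r (null_partner r) * eta s (null_partner s)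
  * X (null_partner n) (null_partner r) (null_partner s).
Proof.
rewrite /transform3.
under eq_bigr do under eq_bigr do under eq_bigr do rewrite !mxE -mulrA.
under eq_bigr do under eq_bigr do rewrite -mulr_sumr sum_eta -mulrA.
under eq_bigr do rewrite -mulr_sumr sum_eta.
by rewrite sum_eta; ring.
Qed.

Definition vector_frame X a : C := \sum_p \sum_q eta p q * X q p a.

Definition tensor_frame X p q r : C :=
  2^-1 * (X p q r + X q p r)
  - 6^-1 * (eta r p * vector_frame X q + eta r q * vector_frame X p)
  + 3^-1 * eta p q * vector_frame X r.

Definition axial_frame X : C := contract3 (levi_symbol C 0) (transform3 eta_mx X).

Variable X : 'I_4 -> 'I_4 -> 'I_4 -> C.
Hypothesis X_antisym : forall a b c, X a b c = - X a c b.

Lemma diag_antisym a b : X a b b = 0.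
Proof.
by apply/eqP; move: (X_antisym a b b) => /eqP; rewrite -addr_eq0 -mulr2n mulrn_eq0.
Qed.

Lemma axial_frameE : axial_frame X = 2 * (X 0 2 3 + X 3 0 2 - X 2 0 3).
Proof.
pose L := levi_symbol C.
have rep i1 i2 m n r s :
    i1 != i2 -> tnth [tuple m; n; r; s] i1 = tnth [tuple m; n; r; s] i2 -> L m n r s = 0.
  exact: levi_symbol_alternate.
have L00 r s : L 0 0 r s = 0 by apply: (@rep 0 1).
have L0n0 n s : L 0 n 0 s = 0 by apply: (@rep 0 2).
have L0nr0 n r : L 0 n r 0 = 0 by apply: (@rep 0 3).
have L0nn n s : L 0 n n s = 0 by apply: (@rep 1 2).
have L0nrn n r : L 0 n r n = 0 by apply: (@rep 1 3).
have L0nrr n r : L 0 n r r = 0 by apply: (@rep 2 3).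
have L0123 : L 0 1 2 3 = 1 by exact: levi_symbol0123.
have L0132 : L 0 1 3 2 = -1 by rewrite /L levi_symbol_swap34 levi_symbol0123.
have L0213 : L 0 2 1 3 = -1 by rewrite /L levi_symbol_swap23 levi_symbol0123.
have L0231 : L 0 2 3 1 = 1 by rewrite /L levi_symbol_swap34 -/L L0213 opprK.
have L0312 : L 0 3 1 2 = 1 by rewrite /L levi_symbol_swap23 -/L L0132 opprK.
have L0321 : L 0 3 2 1 = -1 by rewrite /L levi_symbol_swap34 -/L L0312.
rewrite /axial_frame /contract3 -/L.
under eq_bigr do under eq_bigr do under eq_bigr do rewrite transform3_eta.
rewrite !sum4 !(L00, L0n0, L0nr0, L0nn, L0nrn, L0nrr) L0123 L0132 L0213 L0231 L0312 L0321.
rewrite /null_partner /eta /= (X_antisym 0 3 2) (X_antisym 3 2 0) (X_antisym 2 3 0).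
ring.
Qed.

Ltac kill_positive H :=
  repeat match goal with |- context [X ?a ?b ?c] => rewrite (H a b c); last by [] end.

Lemma boost_nonpositive3_parts :
  boost_nonpositive3 X <->
  [/\ boost_nonpositive3 (tensor_frame X), vector_frame X 0 = 0 & axial_frame X = 0].
Proof.
split=> [HX | [Ht HV HA]].
  have HV : vector_frame X 0 = 0.
    by rewrite /vector_frame !sum4 /eta /=; kill_positive HX; ring.
  split=> //; last by rewrite axial_frameE; kill_positive HX; ring.
  move=> p q r; case: (ord4P p) => ->; case: (ord4P q) => ->; case: (ord4P r) => -> //= _;
    rewrite /tensor_frame ?HV /eta /=; kill_positive HX; rewrite ?HV; ring.
have X002 : X 0 0 2 = tensor_frame X 0 0 2 by rewrite /tensor_frame HV /eta /=; field.
have X003 : X 0 0 3 = tensor_frame X 0 0 3 by rewrite /tensor_frame HV /eta /=; field.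
have X001 : X 0 0 1 = tensor_frame X 0 0 1 by rewrite /tensor_frame HV /eta /=; field.
have X202 : X 2 0 2 = 2 * tensor_frame X 2 0 2.
  by rewrite /tensor_frame HV diag_antisym /eta /=; field.
have X303 : X 3 0 3 = 2 * tensor_frame X 3 0 3.
  by rewrite /tensor_frame HV diag_antisym /eta /=; field.
have X203 : X 2 0 3 = 2 * tensor_frame X 0 2 3 - X 0 2 3.
  by rewrite /tensor_frame HV /eta /=; field.
have X302 : X 3 0 2 = 2 * tensor_frame X 0 3 2 + X 0 2 3.
  by rewrite /tensor_frame HV (X_antisym 0 3 2) /eta /=; field.
rewrite !Ht // ?mulr0 ?add0r ?sub0r in X002 X003 X001 X202 X303 X203 X302.
have X023 : X 0 2 3 = 6^-1 * axial_frame X by rewrite axial_frameE X203 X302; field.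
rewrite HA mulr0 in X023; rewrite X023 oppr0 in X203 X302.
move=> a b c; case: (ord4P a) => ->; case: (ord4P b) => ->; case: (ord4P c) => -> //= _;
  rewrite ?diag_antisym // X_antisym;
  by rewrite ?(X001, X002, X003, X023, X202, X203, X302, X303) ?oppr0.
Qed.

End NullFrameAlgebra.

Lemma toCE (R : rcfType) (x : R) : toC x = x%:C.
Proof. by []. Qed.

Section Components.
Variables (R : rcfType) (E : 'I_4 -> 'I_4 -> R[i]).
Implicit Types (X Y : tensor3 R) (V : covec R).

Definition frame_mx : 'M[R[i]]_4 := \matrix_(a, m) E a m.

Lemma comp3E X p q r :
  comp3 E X p q r = transform3 frame_mx (fun a b c => (X a b c)%:C) p q r.
Proof. by do 3 (apply: eq_bigr => ? _); rewrite !mxE toCE; ring. Qed.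

Lemma eq_comp3 X Y :
  (forall a b c, X a b c = Y a b c) -> forall p q r, comp3 E X p q r = comp3 E Y p q r.
Proof. by move=> eqXY p q r; do 3 (apply: eq_bigr => ? _); rewrite eqXY. Qed.

Lemma comp3D X Y p q r :
  comp3 E (fun a b c => X a b c + Y a b c) p q r = comp3 E X p q r + comp3 E Y p q r.
Proof.
rewrite /comp3 -big_split; apply: eq_bigr => m _; rewrite -big_split.
apply: eq_bigr => n _; rewrite -big_split; apply: eq_bigr => s _.
by rewrite !toCE rmorphD /=; ring.
Qed.

Lemma comp3B X Y p q r :
  comp3 E (fun a b c => X a b c - Y a b c) p q r = comp3 E X p q r - comp3 E Y p q r.
Proof.
rewrite /comp3 -sumrB; apply: eq_bigr => m _; rewrite -sumrB.
apply: eq_bigr => n _; rewrite -sumrB; apply: eq_bigr => s _.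
by rewrite !toCE rmorphB /=; ring.
Qed.

Lemma comp3Z (k : R) X p q r :
  comp3 E (fun a b c => k * X a b c) p q r = toC k * comp3 E X p q r.
Proof.
rewrite /comp3 mulr_sumr; apply: eq_bigr => m _; rewrite mulr_sumr.
apply: eq_bigr => n _; rewrite mulr_sumr; apply: eq_bigr => s _.
by rewrite !toCE rmorphM /=; ring.
Qed.

Lemma comp3_swap12 X p q r : comp3 E (fun a b c => X b a c) p q r = comp3 E X q p r.
Proof. by rewrite /comp3 exchange_big; do 3 (apply: eq_bigr => ? _); ring. Qed.

Lemma comp3_cycle X p q r : comp3 E (fun a b c => X c a b) p q r = comp3 E X r p q.
Proof.
rewrite /comp3; under eq_bigr do rewrite exchange_big.
by rewrite exchange_big; do 3 (apply: eq_bigr => ? _); ring.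
Qed.

Lemma comp3_outer (h : 'M[R]_4) V p q r :
  comp3 E (fun a b c => h a b * V c) p q r
  = (\sum_m \sum_n toC (h m n) * E p m * E q n) * comp1 E V r.
Proof.
rewrite /comp3 /comp1 mulr_suml; apply: eq_bigr => m _; rewrite mulr_suml.
apply: eq_bigr => n _; rewrite mulr_sumr; apply: eq_bigr => s _.
by rewrite !toCE rmorphM /=; ring.
Qed.

Lemma comp3_antisym T : antisym23 T -> forall a b c, comp3 E T a b c = - comp3 E T a c b.
Proof.
move=> HT a b c; rewrite /comp3 -sumrN; apply: eq_bigr => m _.
rewrite exchange_big -sumrN; apply: eq_bigr => n _; rewrite -sumrN; apply: eq_bigr => s _.
by rewrite (HT m n s) !toCE rmorphN /=; ring.
Qed.

Lemma typeII_or_more1P V : typeII_or_more1 E V <-> comp1 E V 0 = 0.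
Proof. by split=> [HV | HV0 a]; [exact: HV | case: (ord4P a) => ->]. Qed.

End Components.

Section NullFrame.
Variables (R : rcfType) (g : 'M[R]_4) (E : 'I_4 -> 'I_4 -> R[i]) (T : tensor3 R).
Hypothesis HE : null_frame g E.
Local Notation Em := (frame_mx E).
Local Notation gC := (map_mx (real_complex R) g).

Lemma frame_metric : Em *m gC *m Em^T = eta_mx R.
Proof.
apply/matrixP => a b; rewrite !mxE -HE.1 exchange_big; apply: eq_bigr => n _.
by rewrite !mxE mulr_suml; apply: eq_bigr => m _; rewrite !mxE toCE; ring.
Qed.

Lemma frame_mx_unit : Em \in unitmx.
Proof.
have: Em *m (gC *m Em^T *m eta_mx R) = 1%:M.
  by rewrite !mulmxA frame_metric eta_mx_involutive.
by case/mulmx1_unit.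
Qed.

Lemma map_metric_mulmx : gC *m (Em^T *m eta_mx R *m Em) = 1%:M.
Proof.
have Hf : Em *m (gC *m Em^T *m eta_mx R) = 1%:M.
  by rewrite !mulmxA frame_metric eta_mx_involutive.
by rewrite !mulmxA (mulmx1C Hf).
Qed.

Lemma metric_unit : g \in unitmx.
Proof. by rewrite -(map_unitmx (real_complex R)); case/mulmx1_unit: map_metric_mulmx. Qed.

Lemma map_invmx_metric : map_mx (real_complex R) (invmx g) = Em^T *m eta_mx R *m Em.
Proof.
rewrite map_invmx -[LHS]mulmx1 -map_metric_mulmx !mulmxA mulVmx ?mul1mx //.
by rewrite map_unitmx metric_unit.
Qed.

Lemma comp1_Vpart a : comp1 E (Vpart g T) a = vector_frame (comp3 E T) a.
Proof.
have giE b k : (invmx g b k)%:C = \sum_q \sum_p E p b * Defs.eta R p q * E q k.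
  have := congr1 (fun M : 'M[R[i]]_4 => M b k) map_invmx_metric; rewrite /= !mxE => ->.
  by apply: eq_bigr => q _; rewrite !mxE mulr_suml; apply: eq_bigr => p _; rewrite !mxE.
rewrite /comp1 /Vpart.
under eq_bigr => m _ do rewrite toCE rmorph_sum /= mulr_suml.
under eq_bigr => m _ do under eq_bigr => b _ do rewrite rmorph_sum /= mulr_suml.
under eq_bigr => m _ do under eq_bigr => b _ do under eq_bigr => k _ do
  rewrite rmorphM /= giE !mulr_suml.
under eq_bigr => m _ do under eq_bigr => b _ do under eq_bigr => k _ do
  under eq_bigr => q _ do rewrite !mulr_suml.
under eq_bigr => m _ do under eq_bigr => b _ do under eq_bigr => k _ do rewrite exchange_big.
rewrite exchange_big31; apply: eq_bigr => p _; rewrite exchange_big31; apply: eq_bigr => q _.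
rewrite /comp3 mulr_sumr exchange_big3; apply: eq_bigr => m _.
rewrite exchange_big mulr_sumr; apply: eq_bigr => b _.
by rewrite mulr_sumr; apply: eq_bigr => k _; rewrite toCE; ring.
Qed.

Lemma comp3_metric_outer V p q r :
  comp3 E (fun a b c => g a b * V c) p q r = Defs.eta R p q * comp1 E V r.
Proof. by rewrite comp3_outer HE.1. Qed.

Lemma comp3_tpart p q r : comp3 E (tpart g T) p q r = tensor_frame (comp3 E T) p q r.
Proof.
have tpartE a b c : tpart g T a b c = 2^-1 * T a b c + 2^-1 * T b a c
    - 6^-1 * (g c a * Vpart g T b) - 6^-1 * (g c b * Vpart g T a)
    + 3^-1 * (g a b * Vpart g T c).
  by rewrite /tpart; ring.
rewrite /tensor_frame -!comp1_Vpart.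
rewrite (eq_comp3 E tpartE) comp3D !comp3B comp3D !comp3Z (comp3_swap12 E T).
rewrite (comp3_swap12 E (fun a b c => g c a * Vpart g T b)).
rewrite !(comp3_cycle E (fun a b c => g a b * Vpart g T c)).
by rewrite !comp3_metric_outer !toCE !fmorphV !rmorph_nat; ring.
Qed.

Lemma comp1_Apart :
  comp1 E (Apart g T) 0 =
  6^-1 * (Num.sqrt `|\det g|)%:C * \det Em * axial_frame (comp3 E T).
Proof.
have Apart_frame x : (Apart g T x)%:C = 6^-1 * (Num.sqrt `|\det g|)%:C
    * contract3 (levi_symbol R[i] x) (transform3 Em^T (transform3 (eta_mx R) (comp3 E T))).
  rewrite Apart_contract ?metric_unit // !rmorphM /= fmorphV rmorph_nat contract3_map.
  congr (_ * _); apply: eq_contract3 => a b c; first exact: levi_symbol_map.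
  rewrite transform3_map -map_trmx map_invmx_metric !trmx_mul trmxK eta_mx_tr.
  rewrite transform3_mulmx; apply: eq_transform3 => m n r.
  rewrite transform3_mulmx; apply: eq_transform3 => m' n' r'.
  by rewrite comp3E.
rewrite /comp1 /axial_frame -mulrA -contract3_levi_transform mulr_sumr.
by apply: eq_bigr => x _; rewrite toCE Apart_frame mxE; ring.
Qed.

Lemma Apart_factor_neq0 : 6^-1 * (Num.sqrt `|\det g|)%:C * \det Em != 0.
Proof.
rewrite !mulf_neq0 ?invr_eq0 ?pnatr_eq0 //.
  by rewrite fmorph_eq0 sqrtr_eq0 -ltNge normr_gt0 -unitfE -unitmxE metric_unit.
by rewrite -unitfE -unitmxE frame_mx_unit.
Qed.

Lemma typeII_parts : antisym23 T ->
  typeII_or_more3 E T <->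
  typeII_or_more3 E (tpart g T) /\ typeII_or_more1 E (Vpart g T)
  /\ typeII_or_more1 E (Apart g T).
Proof.
move=> /(comp3_antisym E) /boost_nonpositive3_parts parts.
have tpart_iff :
    typeII_or_more3 E (tpart g T) <-> boost_nonpositive3 (tensor_frame (comp3 E T)).
  by split=> Ht a b c /Ht; rewrite comp3_tpart.
have Apart_iff : comp1 E (Apart g T) 0 = 0 <-> axial_frame (comp3 E T) = 0.
  rewrite comp1_Apart; split=> [/eqP | ->]; last by rewrite mulr0.
  by rewrite mulf_eq0 (negbTE Apart_factor_neq0) => /eqP.
rewrite !typeII_or_more1P comp1_Vpart Apart_iff tpart_iff.
by split=> [/parts[] | [Ht [HV HA]]] //; apply/parts.
Qed.

End NullFrame.

Unset Implicit Arguments.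

Theorem lemma1 (R : rcfType) (g : 'M[R]_4) (T : tensor3 R) :
  lorentzian g -> antisym23 T ->
  ((exists E, null_frame g E /\ typeII_or_more3 E T)
   <->
   (exists E, null_frame g E
      /\ typeII_or_more3 E (tpart g T)
      /\ typeII_or_more1 E (Vpart g T)
      /\ typeII_or_more1 E (Apart g T))).
Proof.
move=> _ HT; split=> [[E [HE H]] | [E [HE H]]]; exists E; split=> //.
  exact/(typeII_parts HE HT).
exact/(typeII_parts HE HT).
Qed.
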